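(* For every $\sigma\in\Sigma$ there exist $B\in\mathbb{N}$ and a deck $\beta_1,\ldots,\beta_B\in\mathscr{B}$ such that $T^*_i(\beta_1,\ldots,\beta_B)\ge1$ for all $i\in\mathcal{N}$ and $T^\sigma(\beta_1,\ldots,\beta_B)=T^*(\beta_1,\ldots,\beta_B)$.
   Context: A ballot style consists of contests $\mathcal{C}=\{1,\ldots,C\}$, candidates $\mathcal{N}=\{1,\ldots,N\}$ partitioned into nonempty sets $\mathcal{N}_c$ ($c\in\mathcal{C}$), and positive integers $v_c$. A filled-out ballot is a subset $\beta\subseteq\mathcal{N}$; $\mathscr{B}=\{\beta\subseteq\mathcal{N}: |\mathcal{N}_c\cap\beta|\le v_c\ \forall c\}$. For $i\in\mathcal{N}_c$: $T^*_i(\beta_1,\ldots,\beta_B)=\sum_{b=1}^B\mathbb{I}\{i\in\beta_b\text{ and }|\mathcal{N}_c\cap\beta_b|\le v_c\}$, and for a bijection $\sigma$ of $\mathcal{N}$, $T^\sigma_i(\beta_1,\ldots,\beta_B)=\sum_{b=1}^B\mathbb{I}\{\sigma(i)\in\beta_b\text{ and }|\{\sigma(j)\in\beta_b: j\in\mathcal{N}_c\}|\le v_c\}$. $\Sigma$ is the set of non-identity bijections $\mathcal{N}\to\mathcal{N}$. *)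

From mathcomp Require Import all_boot all_order all_fingroup.
Set Implicit Arguments. Unset Strict Implicit. Unset Printing Implicit Defensive.

(* A ballot style: contests 'I_C, candidates 'I_N; [con i] is the contest
   containing candidate i (so N_c = [set i | con i == c]); [v c] is the
   number of votes allowed in contest c. *)
Definition contest_set (C N : nat) (con : 'I_N -> 'I_C) (c : 'I_C) : {set 'I_N} :=
  [set j | con j == c].

Definition ballot_style (C N : nat) (con : 'I_N -> 'I_C) (v : 'I_C -> nat) : Prop :=
  (forall c, contest_set con c != set0) /\ (forall c, 0 < v c).

Definition valid_ballot (C N : nat) (con : 'I_N -> 'I_C) (v : 'I_C -> nat)
  (beta : {set 'I_N}) : bool :=
  [forall c, #|contest_set con c :&: beta| <= v c].

Definition Tstar (C N : nat) (con : 'I_N -> 'I_C) (v : 'I_C -> nat)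
  (B : nat) (deck : 'I_B -> {set 'I_N}) (i : 'I_N) : nat :=
  \sum_(b < B) ((i \in deck b) && (#|contest_set con (con i) :&: deck b| <= v (con i))).

Definition Tsigma (C N : nat) (con : 'I_N -> 'I_C) (v : 'I_C -> nat)
  (sigma : {perm 'I_N}) (B : nat) (deck : 'I_B -> {set 'I_N}) (i : 'I_N) : nat :=
  \sum_(b < B) ((sigma i \in deck b) &&
     (#|[set j in contest_set con (con i) | sigma j \in deck b]| <= v (con i))).

From mathcomp Require Import all_boot all_order all_fingroup.
Set Implicit Arguments. Unset Strict Implicit. Unset Printing Implicit Defensive.

(* Take the deck of singleton ballots: one ballot per candidate
   b, marking b alone.  Because every v_c is positive, a single mark never
   overvotes a contest, so each ballot is valid and every mark is counted.
   Hence T*_i = 1 for every candidate i.  Under the relabelling sigma the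
   ballot counted for i is the one marking sigma(i); only candidate i of its
   contest is sent to a mark (sigma is injective), so again nothing is an
   overvote and T^sigma_i = 1 as well. *)

Definition singleton_deck (N : nat) (b : 'I_N) : {set 'I_N} := [set b].
Arguments singleton_deck {N} b.

Lemma card_setI1_le1 (T : finType) (A : {set T}) (x : T) : #|A :&: [set x]| <= 1.
Proof. by rewrite -(cards1 x) subset_leq_card // subsetIr. Qed.

Lemma sum_singleton_deck (N : nat) (x : 'I_N) (P : 'I_N -> bool) :
  \sum_(b < N) ((x \in singleton_deck b) && P b) = P x.
Proof.
rewrite (bigD1 x) //= in_set1 eqxx big1 ?addn0 // => b /negbTE bx.
by rewrite in_set1 eq_sym bx.
Qed.

Section SingletonDeck.

Variables (C N : nat) (con : 'I_N -> 'I_C) (v : 'I_C -> nat).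
Hypothesis v_pos : forall c, 0 < v c.

Lemma singleton_deck_valid (b : 'I_N) : valid_ballot con v (singleton_deck b).
Proof. by apply/forallP => c; rewrite (leq_trans (card_setI1_le1 _ _) (v_pos c)). Qed.

Lemma Tstar_singleton_deck (i : 'I_N) : Tstar con v singleton_deck i = 1.
Proof.
rewrite /Tstar sum_singleton_deck.
by rewrite (leq_trans (card_setI1_le1 _ _) (v_pos _)).
Qed.

(* The relabelled tally also gives every candidate exactly one vote: the
   ballot for sigma(i) has a single preimage mark, namely i itself. *)
Lemma Tsigma_singleton_deck (sigma : {perm 'I_N}) (i : 'I_N) :
  Tsigma con v sigma singleton_deck i = 1.
Proof.
rewrite /Tsigma sum_singleton_deck.
have preim_le1 : #|[set j in contest_set con (con i) | sigma j \in [set sigma i]]| <= 1.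
  rewrite -(cards1 i) subset_leq_card //.
  by apply/subsetP => j; rewrite !inE => /andP[_ /eqP/perm_inj ->].
by rewrite (leq_trans preim_le1 (v_pos _)).
Qed.

End SingletonDeck.

Theorem proposition6 (C N : nat) (con : 'I_N -> 'I_C) (v : 'I_C -> nat)
  (Hstyle : ballot_style con v) (sigma : {perm 'I_N}) (Hsigma : sigma != 1%g) :
  exists (B : nat) (deck : 'I_B -> {set 'I_N}),
    (forall b, valid_ballot con v (deck b)) /\
    (forall i, 1 <= Tstar con v deck i) /\
    (forall i, Tsigma con v sigma deck i = Tstar con v deck i).
Proof.
case: Hstyle => _ v_pos.
exists N, singleton_deck; split; [|split] => [b|i|i].
- exact: singleton_deck_valid.
- by rewrite (Tstar_singleton_deck _ v_pos).
- by rewrite (Tstar_singleton_deck _ v_pos) (Tsigma_singleton_deck _ v_pos).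
Qed.
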